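(* Let $D$ be an instance all of whose tuples are endogenous ($D^n=D$), let $\mathcal{Q}$ be a monotone query, and let $\bar a\in\mathcal{Q}(D)$. A tuple $t$ is an actual cause for $\bar a$ if and only if there is $D'\subseteq D$ with $t\in(D\smallsetminus D')\subseteq D^n$ and $(D,D',\bar a)\in\mathcal{MSSEP}^{s}(\mathcal{Q})$.
   Context: A query $\mathcal{Q}$ is monotone if $D_1\subseteq D_2$ implies $\mathcal{Q}(D_1)\subseteq\mathcal{Q}(D_2)$; $D\models\mathcal{Q}(\bar a)$ means $\bar a\in\mathcal{Q}(D)$. A tuple $\tau\in D^n$ is an actual cause for $\bar a$ if there is $\Gamma\subseteq D^n$ with $D\smallsetminus\Gamma\models\mathcal{Q}(\bar a)$ and $D\smallsetminus(\Gamma\cup\{\tau\})\not\models\mathcal{Q}(\bar a)$. $\mathcal{MSSEP}^{s}(\mathcal{Q})$ is the set of triples $(D,D',\bar a)$ with $\bar a\in\mathcal{Q}(D)$, $D'\subseteq D$, $\bar a\notin\mathcal{Q}(D')$, and $D'$ subset-maximal among subsets of $D$ with this last property. *)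

From mathcomp Require Import all_boot.
From mathcomp Require Import finmap.
Set Implicit Arguments. Unset Strict Implicit. Unset Printing Implicit Defensive.
Local Open Scope fset_scope.

(* A database instance is a finite set of tuples (facts) of type T.
   A query maps an instance to its set of answers: Q D a means "D |= Q(a)". *)
Definition query (T : choiceType) (A : Type) := {fset T} -> A -> Prop.

Definition monotone (T : choiceType) (A : Type) (Q : query T A) : Prop :=
  forall (D1 D2 : {fset T}) (a : A), D1 `<=` D2 -> Q D1 a -> Q D2 a.

(* tau is an actual cause for a, where Dn is the set of endogenous tuples of D *)
Definition actual_cause (T : choiceType) (A : Type) (Q : query T A)
  (D Dn : {fset T}) (a : A) (tau : T) : Prop :=
  tau \in Dn /\
  exists Gamma : {fset T}, Gamma `<=` Dn /\ Q (D `\` Gamma) a /\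
     ~ Q (D `\` (Gamma `|` [fset tau])) a.

Definition MSSEP (T : choiceType) (A : Type) (Q : query T A)
  (D D' : {fset T}) (a : A) : Prop :=
  [/\ Q D a, D' `<=` D, ~ Q D' a &
      forall D'' : {fset T}, D' `<=` D'' -> D'' `<=` D -> ~ Q D'' a -> D'' = D'].

(* An actual cause t comes with a contingency set Gamma such that removing t
   from D \ Gamma falsifies Q; extending the falsifying instance
   D \ (Gamma ∪ {t}) to a maximal one D' keeps t outside D', for otherwise D'
   would contain D \ Gamma and satisfy Q by monotonicity.  Conversely, for a
   maximal falsifying D' and t in D \ D', the contingency set D \ (D' ∪ {t})
   leaves exactly D' ∪ {t}, which satisfies Q by maximality of D', and
   removing t leaves D'. *)

From mathcomp Require Import all_boot.
From mathcomp Require Import finmap.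
From mathcomp Require Import zify.
From Stdlib Require Import Classical.
Set Implicit Arguments. Unset Strict Implicit.
Local Open Scope fset_scope.

Section MaximalSubset.

Variable T : choiceType.

Lemma ex_maximal_fsubset (P : {fset T} -> Prop) (D S : {fset T}) :
  S `<=` D -> P S ->
  exists2 M, S `<=` M &
    [/\ M `<=` D, P M & forall M', M `<=` M' -> M' `<=` D -> P M' -> M' = M].
Proof.
have [n] := ubnP (#|` D| - #|` S|); elim: n S => // n IH S ltDS SD PS.
have [[M' [SM' M'D PM']] | noBigger] :=
  classic (exists M', [/\ S `<` M', M' `<=` D & P M']).
  have ltSM' := fproper_ltn_card SM'.
  have leM'D := fsubset_leq_card M'D.
  have [M M'M [MD PM maxM]] := IH M' ltac:(lia) M'D PM'.
  by exists M => //; apply: fsubset_trans M'M; apply: fproper_sub.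
exists S => //; split=> // M' SM' M'D PM'.
apply: NNPP => neqM'S; apply: noBigger; exists M'; split=> //.
by rewrite fproperEneq SM' andbT; apply/eqP => eqSM'; apply: neqM'S.
Qed.

End MaximalSubset.

Section CausesAndMaximalSubsets.

Variables (T : choiceType) (A : Type) (Q : query T A) (D : {fset T}) (a : A).

Lemma actual_cause_MSSEP (t : T) :
  monotone Q -> Q D a -> actual_cause Q D D a t ->
  exists D', t \in D `\` D' /\ MSSEP Q D D' a.
Proof.
move=> monoQ QD [tD [G [_ [QDG notQDGt]]]].
have [D' SD' [D'D notQD' maxD']] :=
  ex_maximal_fsubset (P := fun S => ~ Q S a) (fsubsetDl D (G `|` [fset t])) notQDGt.
exists D'; split; last by split.
rewrite in_fsetD tD andbT; apply/negP => tD'; apply: notQD'.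
apply: monoQ QDG; rewrite -(mem_fset1U tD') -fsubDset fsetDDl.
exact: SD'.
Qed.

Lemma MSSEP_actual_cause (D' : {fset T}) (t : T) :
  MSSEP Q D D' a -> t \in D `\` D' -> actual_cause Q D D a t.
Proof.
move=> [_ D'D notQD' maxD'] /fsetDP [tD tD'].
have tD'D : t |` D' `<=` D by rewrite fsubUset fsub1set tD D'D.
split=> //; exists (D `\` (t |` D')); split; first exact: fsubsetDl.
rewrite -[D `\` (_ `|` [fset t])]fsetDDl fsetDK // fsetU1K //; split=> //.
apply: NNPP => notQtD'; move: tD'.
by rewrite -(maxD' _ (fsubsetUr _ _) tD'D notQtD') fset1U1.
Qed.

End CausesAndMaximalSubsets.

Theorem proposition10 (T : choiceType) (A : Type) (Q : query T A)
  (D Dn : {fset T}) (a : A) (t : T) :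
  Dn = D -> monotone Q -> Q D a ->
  (actual_cause Q D Dn a t <->
   exists D' : {fset T}, [/\ t \in D `\` D', D `\` D' `<=` Dn & MSSEP Q D D' a]).
Proof.
move=> -> monoQ QD; split.
  move=> /(actual_cause_MSSEP monoQ QD) [D' [tDD' mssep]].
  by exists D'; split=> //; apply: fsubsetDl.
by move=> [D' [tDD' _ mssep]]; apply: MSSEP_actual_cause mssep tDD'.
Qed.
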